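(* Let $\{p_{(R,\alpha)}(\mathbf{x})\}_{(R,\alpha)}$ be a replacement rule satisfying the Fixation Axiom and Assumption 1. Then the linear system $$d^\circ_gv_g=\sum_{h\in G}e^\circ_{gh}v_h\ \ (g\in G),\qquad \sum_{g\in G}v_g=n$$ has a unique solution $(v_g)_{g\in G}$, and $v_g\ge 0$ for every $g\in G$.
   Context: $G$ is a finite nonempty set of genetic sites, $n=|G|$; a state is $\mathbf{x}\in\{0,1\}^G$; $\mathbf{a}$ is the all-zero state and $\mathbf{A}$ the all-one state. A replacement event is $(R,\alpha)$ with $R\subseteq G$, $\alpha:R\to G$; a replacement rule gives for each state a probability distribution $\{p_{(R,\alpha)}(\mathbf{x})\}$ over events. Fixation Axiom: there exist $g\in G$, $m\ge1$, events $(R_k,\alpha_k)_{k=1}^m$ with $p_{(R_k,\alpha_k)}(\mathbf{x})>0$ for all $k$ and all states $\mathbf{x}$, $g\in R_k$ for some $k$, and $\tilde\alpha_1\circ\cdots\circ\tilde\alpha_m(h)=g$ for all $h\in G$, where $\tilde\alpha_k$ equals $\alpha_k$ on $R_k$ and the identity elsewhere. Assumption 1: $p_{(R,\alpha)}(\mathbf{A})=p_{(R,\alpha)}(\mathbf{a})=:p^\circ_{(R,\alpha)}$ for every event. Then $e^\circ_{gh}=\sum_{(R,\alpha):h\in R,\alpha(h)=g}p^\circ_{(R,\alpha)}$ and $d^\circ_g=\sum_he^\circ_{hg}$. *)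

From HB Require Import structures.
From mathcomp Require Import all_boot all_order all_algebra.
Set Implicit Arguments. Unset Strict Implicit. Unset Printing Implicit Defensive.
Import Order.TTheory GRing.Theory Num.Theory.
Local Open Scope ring_scope.

Notation state G := {ffun G -> bool}.
Definition state_a (G : finType) : state G := [ffun _ => false].
Definition state_A (G : finType) : state G := [ffun _ => true].

(* A replacement event (R, alpha) with alpha : R -> G is encoded canonically
   by the pair (R, alpha~) where alpha~ : G -> G agrees with alpha on R and is
   the identity outside R.  This is a bijection with the events of the paper. *)
Definition canon_event (G : finType) (e : {set G} * {ffun G -> G}) : bool :=
  [forall h, (h \notin e.1) ==> (e.2 h == h)].
Definition event (G : finType) := {e : {set G} * {ffun G -> G} | canon_event e}.
Definition ev_set (G : finType) (e : event G) : {set G} := (val e).1.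
Definition ev_map (G : finType) (e : event G) : G -> G := (val e).2.

Definition replacement_rule (R : realFieldType) (G : finType)
  (p : state G -> event G -> R) : Prop :=
  (forall x e, 0 <= p x e) /\ (forall x, \sum_(e : event G) p x e = 1).

Definition comp_events (G : finType) (s : seq (event G)) (h : G) : G :=
  foldr (fun e acc => ev_map e acc) h s.

Definition fixation_axiom (R : realFieldType) (G : finType)
  (p : state G -> event G -> R) : Prop :=
  exists (g : G) (s : seq (event G)),
    (1 <= size s)%N /\
    (forall e, e \in s -> forall x, 0 < p x e) /\
    (exists2 e, e \in s & g \in ev_set e) /\
    (forall h, comp_events s h = g).

Definition assumption1 (R : realFieldType) (G : finType)
  (p : state G -> event G -> R) : Prop :=
  forall e, p (state_A G) e = p (state_a G) e.

Definition p_circ (R : realFieldType) (G : finType)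
  (p : state G -> event G -> R) (e : event G) : R := p (state_a G) e.

Definition e_circ (R : realFieldType) (G : finType)
  (p : state G -> event G -> R) (g h : G) : R :=
  \sum_(e : event G | (h \in ev_set e) && (ev_map e h == g)) p_circ p e.

Definition d_circ (R : realFieldType) (G : finType)
  (p : state G -> event G -> R) (g : G) : R :=
  \sum_(h : G) e_circ p h g.

Definition lin_system (R : realFieldType) (G : finType)
  (p : state G -> event G -> R) (v : {ffun G -> R}) : Prop :=
  (forall g, d_circ p g * v g = \sum_(h : G) e_circ p g h * v h) /\
  \sum_(g : G) v g = (#|G|%:R : R).

From HB Require Import structures.
From mathcomp Require Import all_boot all_order all_algebra lra.
Import Order.TTheory GRing.Theory Num.Theory.
Set Implicit Arguments. Unset Strict Implicit. Unset Printing Implicit Defensive.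
Local Open Scope ring_scope.

(* At the all-[a] state the events define a Markov chain on sites moving [h]
   to [alpha~ h]; its column-stochastic transition matrix is
   [P = e° + I - diag d°], so the linear system says that [v] is stationary
   for [P] with total mass [n].  Since [P] is nonnegative and preserves sums,
   it has a nonzero stationary vector, and the positive part of a stationary
   vector is again stationary.  By the Fixation Axiom [g] is reached from every
   site with positive probability, so a stationary vector that is positive
   (negative) somewhere is positive (negative) at [g].  Hence a stationary
   vector of zero sum vanishes, which gives uniqueness, and normalizing the
   positive part of a nonzero stationary vector gives existence. *)

Section Stationary.
Variables (R : realFieldType) (G : finType) (P : G -> G -> R).

Definition stationary (u : G -> R) := forall i, \sum_h P i h * u h = u i.

Lemma stationary_lincomb a b u w :
  stationary u -> stationary w -> stationary (fun k => a * u k + b * w k).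
Proof.
move=> su sw i; rewrite -su -sw !mulr_sumr -big_split /=; apply: eq_bigr => k _.
by rewrite mulrDr !mulrA ![_ * P _ _]mulrC.
Qed.

Lemma stationaryN u : stationary u -> stationary (fun k => - u k).
Proof.
move=> su i; have := stationary_lincomb (-1) 0 su su i.
by under eq_bigr do rewrite mul0r addr0 mulN1r; rewrite mul0r addr0 mulN1r.
Qed.

Lemma stationaryZ c u : stationary u -> stationary (fun k => c * u k).
Proof.
move=> su i; have := stationary_lincomb c 0 su su i.
by under eq_bigr do rewrite mul0r addr0; rewrite mul0r addr0.
Qed.

Lemma stationaryB u w : stationary u -> stationary w -> stationary (fun k => u k - w k).
Proof.
move=> su sw i; have := stationary_lincomb 1 (-1) su sw i.
by under eq_bigr do rewrite mul1r mulN1r; rewrite mul1r mulN1r.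
Qed.

Hypothesis P_ge0 : forall i h, 0 <= P i h.
Hypothesis P_col : forall h, \sum_i P i h = 1.

Lemma sum_stochastic_mul u : \sum_i \sum_h P i h * u h = \sum_h u h.
Proof.
by rewrite exchange_big; apply: eq_bigr => h _; rewrite -mulr_suml P_col mul1r.
Qed.

Lemma stationary_pos_part u : stationary u -> stationary (fun h => Num.max (u h) 0).
Proof.
move=> su; set v := fun h => _.
have v_ge0 h : 0 <= v h by rewrite le_max lexx orbT.
have le_v i : v i <= \sum_h P i h * v h.
  rewrite ge_max sumr_ge0 ?andbT => [|h _]; last exact: mulr_ge0.
  by rewrite -su; apply: ler_sum => h _; rewrite ler_wpM2l // le_max lexx.
have defect0 : \sum_i (\sum_h P i h * v h - v i) = 0.
  by rewrite sumrB sum_stochastic_mul subrr.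
move=> i; apply/eqP; rewrite -subr_eq0; apply/eqP.
by apply: (psumr_eq0P _ defect0) => // j _; rewrite subr_ge0.
Qed.

Lemma stationary_gt0_step w i h :
  stationary w -> (forall k, 0 <= w k) -> 0 < P i h -> 0 < w h -> 0 < w i.
Proof.
move=> sw w_ge0 Pih wh; rewrite -sw (bigD1 h) //=.
apply: (lt_le_trans (mulr_gt0 Pih wh)).
by rewrite lerDl sumr_ge0 // => k _; apply: mulr_ge0.
Qed.

(* [1 *m A = 0] for [A = P - I] read in the enumeration of [G], so [A] is
   singular and has a nonzero vector [v] with [A *m v = 0]. *)
Lemma exists_stationary_neq0 :
  (0 < #|G|)%N -> exists2 u, stationary u & exists h, u h != 0.
Proof.
move=> G_gt0; have [x0 _] := sigW (card_gt0P G_gt0).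
have sum_enum (F : G -> R) : \sum_(i < #|G|) F (enum_val i) = \sum_x F x.
  by rewrite -big_enum_val; apply: eq_bigl => x; rewrite inE.
pose A : 'M[R]_#|G| := \matrix_(i, j) (P (enum_val i) (enum_val j) - (i == j)%:R).
have detA : \det A^T == 0.
  rewrite det_tr; apply/det0P; exists (const_mx 1).
    apply/negP => /eqP/matrixP/(_ 0 (enum_rank x0)); rewrite !mxE => /eqP.
    by rewrite oner_eq0.
  apply/rowP => j; rewrite !mxE.
  under eq_bigr => i _ do rewrite !mxE mul1r.
  rewrite sumrB (sum_enum (P^~ (enum_val j))) P_col.
  by rewrite (bigD1 j) //= eqxx big1 ?addr0 ?subrr // => i /negPf ->.
have [v v_neq0 vA] := det0P detA.
exists (fun x => v 0 (enum_rank x)).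
  move=> x; move/rowP/(_ (enum_rank x)): vA; rewrite !mxE.
  under eq_bigr => j _ do rewrite !mxE enum_rankK mulrBr mulrC.
  rewrite sumrB [X in _ - X](bigD1 (enum_rank x)) //= eqxx mulr1 [X in _ - (_ + X)]big1 => [|j].
    move/eqP; rewrite addr0 subr_eq0 => /eqP <-; rewrite -sum_enum.
    by apply: eq_bigr => j _; rewrite enum_valK.
  by rewrite eq_sym => /negPf ->; rewrite mulr0.
have /existsP [j vj] : [exists j, v 0 j != 0].
  apply: contraNT v_neq0 => /existsPn v0; apply/eqP/rowP => j.
  by rewrite mxE; apply/eqP; rewrite -[_ == _]negbK.
by exists (enum_val j); rewrite enum_valK.
Qed.

Lemma exists_stationary_normalized : (0 < #|G|)%N ->
  exists v : {ffun G -> R},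
    [/\ stationary v, forall k, 0 <= v k & \sum_k v k = #|G|%:R].
Proof.
move=> G_gt0; have [u su [h uh]] := exists_stationary_neq0 G_gt0.
have [w sw wh] : exists2 w, stationary w & 0 < w h.
  case: (ltgtP (u h) 0) => [uh_lt0|uh_gt0|uh0]; last by rewrite uh0 eqxx in uh.
    by exists (fun k => - u k); [apply: stationaryN | rewrite oppr_gt0].
  by exists u.
pose w' := fun k => Num.max (w k) 0.
have w'_ge0 k : 0 <= w' k by rewrite le_max lexx orbT.
have sum_w'_gt0 : 0 < \sum_k w' k.
  rewrite (bigD1 h) //=; apply: (@lt_le_trans _ _ (w' h)); first by rewrite lt_max wh.
  by rewrite lerDl sumr_ge0.
pose c := #|G|%:R / \sum_k w' k.
exists [ffun k => c * w' k]; split.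
- move=> i; rewrite ffunE -(stationaryZ c (stationary_pos_part sw) i).
  by apply: eq_bigr => k _; rewrite ffunE.
- by move=> k; rewrite ffunE mulr_ge0 // divr_ge0 // ltW.
- under eq_bigr do rewrite ffunE.
  by rewrite -mulr_sumr divfK // gt_eqF.
Qed.

Variable g : G.
Hypothesis g_accessible : forall w h,
  stationary w -> (forall k, 0 <= w k) -> 0 < w h -> 0 < w g.

Lemma stationary_gt0_accessible u h : stationary u -> 0 < u h -> 0 < u g.
Proof.
move=> su uh; have := g_accessible (h := h) (stationary_pos_part su).
by rewrite !lt_max ltxx !orbF; apply=> // k; rewrite le_max lexx orbT.
Qed.

Lemma stationary_sum0 u : stationary u -> \sum_k u k = 0 -> forall k, u k = 0.
Proof.
wlog ug : u / 0 <= u g => [hwlog su sum0 k|su sum0].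
  have [|ug_lt0] := lerP 0 (u g); first by move=> ug; apply: hwlog.
  apply/eqP; rewrite -oppr_eq0; apply/eqP; apply: hwlog (stationaryN su) _ k.
    by rewrite oppr_ge0 ltW.
  by rewrite sumrN sum0 oppr0.
have u_ge0 k : 0 <= u k.
  rewrite leNgt; apply/negP => uk_lt0.
  have := stationary_gt0_accessible (stationaryN su) (h := k).
  by rewrite !oppr_gt0 => /(_ uk_lt0); rewrite ltNge ug.
by move=> k; apply: (psumr_eq0P _ sum0).
Qed.

Lemma stationary_unique v w : stationary v -> stationary w ->
  \sum_k v k = \sum_k w k -> forall k, v k = w k.
Proof.
move=> sv sw sum_eq k; apply/eqP; rewrite -subr_eq0; apply/eqP.
by apply: (stationary_sum0 (stationaryB sv sw)); rewrite sumrB sum_eq subrr.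
Qed.

End Stationary.

Lemma ev_map_notin (G : finType) (e : event G) h : h \notin ev_set e -> ev_map e h = h.
Proof. by move=> hS; have /forallP/(_ h)/implyP/(_ hS)/eqP := valP e. Qed.

Section Transition.
Variables (R : realFieldType) (G : finType) (p : state G -> event G -> R).

Definition transition (i h : G) : R := \sum_(e : event G | ev_map e h == i) p_circ p e.

Lemma d_circE h : d_circ p h = \sum_(e : event G | h \in ev_set e) p_circ p e.
Proof. by rewrite /d_circ /e_circ (partition_big (fun e => ev_map e h) xpredT). Qed.

Hypothesis rule : replacement_rule p.

Lemma p_circ_ge0 e : 0 <= p_circ p e.
Proof. by case: rule => p_ge0 _; apply: p_ge0. Qed.

Lemma sum_p_circ : \sum_(e : event G) p_circ p e = 1.
Proof. by case: rule => _; apply. Qed.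

Lemma transition_ge0 i h : 0 <= transition i h.
Proof. by apply: sumr_ge0 => e _; apply: p_circ_ge0. Qed.

Lemma transition_col h : \sum_i transition i h = 1.
Proof. by rewrite -sum_p_circ (partition_big (fun e => ev_map e h) xpredT). Qed.

Lemma transitionE i h : transition i h = e_circ p i h + (i == h)%:R * (1 - d_circ p h).
Proof.
rewrite /transition (bigID (fun e => h \in ev_set e)) /=; congr (_ + _).
  by apply: eq_bigl => e; rewrite andbC.
have -> : 1 - d_circ p h = \sum_(e : event G | h \notin ev_set e) p_circ p e.
  by rewrite d_circE -sum_p_circ (bigID (fun e => h \in ev_set e)) /= addrC addrK.
have [->|ne] := eqVneq i h.
  rewrite mul1r; apply: eq_bigl => e.
  by apply/andP/idP => [[]//|hS]; rewrite ev_map_notin.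
rewrite mul0r big_pred0 // => e; apply/andP => -[/eqP + hS].
by rewrite ev_map_notin // => /esym/eqP; rewrite (negPf ne).
Qed.

Lemma stationary_transitionE u : stationary transition u <->
  (forall g, d_circ p g * u g = \sum_h e_circ p g h * u h).
Proof.
have E i : \sum_h transition i h * u h
           = \sum_h e_circ p i h * u h + (1 - d_circ p i) * u i.
  under eq_bigr do rewrite transitionE mulrDl.
  rewrite big_split /=; congr (_ + _); rewrite (bigD1 i) //= eqxx mul1r big1 ?addr0 // => h /negPf hi.
  by rewrite eq_sym hi !mul0r.
split=> su i; move: (su i); rewrite E; lra.
Qed.

Lemma lin_system_stationary v :
  lin_system p v <-> stationary transition v /\ \sum_g v g = #|G|%:R.
Proof. by rewrite /lin_system stationary_transitionE. Qed.

Lemma comp_events_gt0 w s h :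
  stationary transition w -> (forall k, 0 <= w k) ->
  (forall e, e \in s -> 0 < p_circ p e) -> 0 < w h -> 0 < w (comp_events s h).
Proof.
move=> sw w_ge0; elim: s => [|e s IH] //= s_pos wh.
apply: (stationary_gt0_step transition_ge0 sw w_ge0 _ (IH _ wh)); last first.
  by move=> f fs; apply: s_pos; rewrite in_cons fs orbT.
rewrite /transition (bigD1 e) //=.
apply: (lt_le_trans (s_pos e (mem_head _ _))).
by rewrite lerDl sumr_ge0 // => f _; apply: p_circ_ge0.
Qed.

End Transition.

Theorem proposition1 (R : realFieldType) (G : finType)
  (p : state G -> event G -> R) :
  (0 < #|G|)%N ->
  replacement_rule p ->
  fixation_axiom p ->
  assumption1 p ->
  exists v : {ffun G -> R},
    [/\ lin_system p v,
        (forall w : {ffun G -> R}, lin_system p w -> w = v)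
      & (forall g, 0 <= v g)].
Proof.
(* Only [p] at the all-[a] state matters. *)
move=> G_gt0 rule [g [s [_ [s_pos [_ s_fix]]]]] _.
have P_ge0 := transition_ge0 rule; have P_col := transition_col rule.
have g_accessible w h : stationary (transition p) w -> (forall k, 0 <= w k) ->
    0 < w h -> 0 < w g.
  move=> sw w_ge0 wh; rewrite -(s_fix h).
  by apply: (comp_events_gt0 rule) => // e /s_pos; apply.
have [v [sv v_ge0 sum_v]] := exists_stationary_normalized P_ge0 P_col G_gt0.
exists v; split=> // [|w /(lin_system_stationary rule) [sw sum_w]].
  exact/lin_system_stationary.
apply/ffunP; apply: (stationary_unique P_ge0 P_col g_accessible sw sv).
by rewrite sum_w sum_v.
Qed.
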